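(* For $n\ge1$ and even $h\ge0$, the number of unlabelled unicellular $n$-vertex maps in the orientable surface $\mathbf S_{h/2}$ is at most $2^{4n+3h}h^h$.
   Context: A map is a connected pseudograph (loops and multiple edges allowed) cellularly embedded in a surface, considered unlabelled and unrooted; it is unicellular if it has exactly one face. $\mathbf S_k$ is the orientable surface with $k$ handles (Euler genus $2k$). Convention $0^0=1$. *)

From mathcomp Require Import all_boot all_fingroup.
Set Implicit Arguments. Unset Strict Implicit. Unset Printing Implicit Defensive.

(* Orientable maps encoded as combinatorial maps (rotation systems) on the
   dart set 'I_(2m) (m = number of edges):
     a : fixed-point-free involution (the two darts of each edge),
     s : vertex rotation (its cycles are the vertices),
     a * s (x |-> s (a x)) : face permutation (its cycles are the faces). *)

Definition dart (m : nat) := 'I_(2 * m).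
Definition cmap (m : nat) := ({perm dart m} * {perm dart m})%type.

Definition is_cmap m (M : cmap m) : bool :=
  let: (a, s) := M in
  [&& [forall x, a x != x],
      [forall x, a (a x) == x] &
      (* connectedness: the group <a, s> acts transitively *)
      [forall x, forall y, connect (fun u v => (v == a u) || (v == s u)) x y]].

(* number of vertices / faces; the edgeless map (m = 0) is the one-vertex
   one-face map, hence the [maxn 1]. *)
Definition nverts m (M : cmap m) : nat := maxn 1 #|porbits M.2|.
Definition nfaces m (M : cmap m) : nat := maxn 1 #|porbits (M.1 * M.2)%g|.

(* The map lies in S_k (Euler genus 2k): V - E + F = 2 - 2k. *)
Definition in_surface (k : nat) m (M : cmap m) : bool :=
  nverts M + nfaces M + 2 * k == m + 2.

(* unlabelled maps: isomorphism classes under relabelling of darts *)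
Definition iso_class m (M : cmap m) : {set cmap m} :=
  [set ((M.1 ^ t)%g, (M.2 ^ t)%g) | t in [set: {perm dart m}]].

(* A unicellular map with n vertices in S_k has exactly n - 1 + 2k edges
   (Euler's formula), so this is the set of all of them. *)
Definition uni_edges (n k : nat) := (n - 1 + 2 * k)%N.

Definition num_unicellular (n k : nat) : nat :=
  #|[set iso_class M | M in
     [set M : cmap (uni_edges n k) |
        is_cmap M && (nverts M == n) && (nfaces M == 1%N)
        && in_surface k M ]]|.

(* Only the numbers of vertices and edges matter: we bound the number of all
   connected maps with n vertices and m = n - 1 + h edges.  Explore such a map
   vertex by vertex, listing the darts of each vertex consecutively in rotation
   order and entering each new vertex through the first listed dart whose
   partner is not listed yet.  Relabel the darts by their position in this
   list.  The vertex rotation is then determined by the set B of the n - 1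
   positions where a new vertex starts, and the n - 1 tree edges pair B
   increasingly with earlier darts.  The remaining 2h darts X are matched among
   themselves, and a matching is determined by the ranks in X of the partners of
   its h openers.  So the map is determined by (X, B, g) with X, B disjoint,
   #|X| = 2h and g : 'I_h -> 'I_(2h), and there are at most
   2^(2m) 2^(2m-2h) (2h)^h <= 2^(4n+3h) h^h such triples. *)

From mathcomp Require Import all_boot all_fingroup zify.
Set Implicit Arguments. Unset Strict Implicit. Unset Printing Implicit Defensive.

(** * Ranks in sets of ordinals *)

Section Rank.
Variable N : nat.
Implicit Types (Y B : {set 'I_N}) (x y : 'I_N).

Definition rank Y x : nat := #|[set y in Y | y < x]|.

Lemma rank_lt_card Y y : y \in Y -> rank Y y < #|Y|.
Proof.
move=> yY; apply: proper_card; rewrite properE; apply/andP; split.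
  by apply/subsetP=> z; rewrite inE => /andP[].
by apply/subsetPn; exists y; rewrite // inE ltnn andbF.
Qed.

Lemma rank_ltn Y x y : x \in Y -> x < y -> rank Y x < rank Y y.
Proof.
move=> xY xy; apply: proper_card; rewrite properE; apply/andP; split.
  by apply/subsetP=> z; rewrite !inE => /andP[-> /ltn_trans->].
by apply/subsetPn; exists x; rewrite !inE ?xY ?xy // ltnn andbF.
Qed.

Lemma rank_inj Y : {in Y &, injective (rank Y)}.
Proof.
move=> x y xY yY e; apply/val_inj/eqP.
by case: ltngtP => // [/(rank_ltn xY)|/(rank_ltn yY)]; rewrite e ltnn.
Qed.

Lemma rank_onto Y k : k < #|Y| -> exists2 y, y \in Y & rank Y y = k.
Proof.
move=> kY; set r := [seq rank Y y | y <- enum Y].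
have r_uniq : uniq r.
  by rewrite map_inj_in_uniq ?enum_uniq // => x y; rewrite !mem_enum; exact: rank_inj.
have r_sub : {subset r <= iota 0 #|Y|}.
  by move=> i /mapP[y]; rewrite mem_enum => /rank_lt_card yY ->; rewrite mem_iota.
have r_size : size (iota 0 #|Y|) <= size r by rewrite size_iota size_map -cardE.
have [_ r_iota] := uniq_min_size r_uniq r_sub r_size.
have /mapP[y] : k \in r by rewrite r_iota mem_iota.
by rewrite mem_enum => yY ->; exists y.
Qed.

Lemma homo_ltn_inj (f : 'I_N -> 'I_N) B :
  {in B &, {homo f : x y / x < y}} -> {in B &, injective f}.
Proof.
move=> f_homo x y xB yB e; apply/val_inj/eqP.
by case: ltngtP => // [/f_homo|/f_homo]; rewrite ?e ltnn; apply.
Qed.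

Lemma rank_homo (f : 'I_N -> 'I_N) B :
  {in B &, {homo f : x y / x < y}} -> {in B, forall b, rank (f @: B) (f b) = rank B b}.
Proof.
move=> f_homo b bB; rewrite /rank.
have -> : [set y in f @: B | y < f b] = f @: [set y in B | y < b].
  apply/setP=> y; rewrite inE; apply/andP/imsetP => [[/imsetP[x xB ->] fxb]|[x]].
    exists x => //; rewrite inE xB; case: ltngtP => // [/(f_homo _ _ bB xB)|/val_inj xb].
      by rewrite ltnNge (ltnW fxb).
    by rewrite xb ltnn in fxb.
  by rewrite inE => /andP[xB xb] ->; rewrite imset_f // f_homo.
apply: card_in_imset => x y; rewrite !inE => /andP[xB _] /andP[yB _].
exact: homo_ltn_inj f_homo x y xB yB.
Qed.

Lemma homo_ltn_onto_eq (f1 f2 : 'I_N -> 'I_N) B :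
  {in B &, {homo f1 : x y / x < y}} -> {in B &, {homo f2 : x y / x < y}} ->
  f1 @: B = f2 @: B -> {in B, f1 =1 f2}.
Proof.
move=> f1_homo f2_homo f12 b bB.
apply: (@rank_inj (f1 @: B)); rewrite ?imset_f ?f12 ?imset_f //.
by rewrite rank_homo // -f12 rank_homo.
Qed.
End Rank.

(** * Matchings encoded by their openers *)

Section Openers.
Variables (N h : nat).
Implicit Types (A : {perm 'I_N}) (X : {set 'I_N}) (g : {ffun 'I_h -> 'I_(2 * h)}).

Definition fpf_involution_on A X : bool :=
  [&& [forall x, A (A x) == x], [forall x, A x != x] & [forall x in X, A x \in X]].

Definition openers A X := [set x in X | x < A x].

Definition opener_code A X g : bool :=
  [forall o in openers A X, forall i : 'I_h,
     (rank (openers A X) o == i) ==> (rank X (A o) == g i)].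

Lemma fpf_involution_onP A X :
  reflect [/\ involutive A, forall x, A x != x & {in X, forall x, A x \in X}]
          (fpf_involution_on A X).
Proof.
apply: (iffP and3P) => [[/forallP Ainv /forallP Afree /forall_inP AX]|[Ainv Afree AX]].
  by split=> // x; apply/eqP.
by split; [apply/forallP=> x; rewrite Ainv | apply/forallP | apply/forall_inP].
Qed.

Lemma card_openers A X : fpf_involution_on A X -> #|X| = #|openers A X| * 2.
Proof.
case/fpf_involution_onP=> Ainv Afree AX; set O := openers A X.
have XE : X = O :|: A @: O.
  apply/setP=> x; rewrite !inE; apply/idP/orP => [xX|[/andP[]//|/imsetP[o]]].
    rewrite xX; case: ltngtP => [|xA|/val_inj/esym/eqP]; [by left | right |].
      by apply/imsetP; exists (A x); rewrite ?Ainv // inE AX // Ainv.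
    by rewrite (negbTE (Afree x)).
  by rewrite inE => /andP[oX _] ->; exact: AX.
have OAO : [disjoint O & A @: O].
  apply/pred0P=> x /=; apply/andP=> -[]; rewrite inE => /andP[_ xA] /imsetP[o].
  rewrite inE => /andP[_ oA] xo; move: xA oA; rewrite xo Ainv.
  by move=> /ltn_trans/[apply]; rewrite ltnn.
rewrite XE cardsU (disjoint_setI0 OAO) cards0 subn0 card_imset ?muln2 ?addnn //.
exact: perm_inj.
Qed.

Section Code.
Variable X : {set 'I_N}.
Hypothesis cardX : #|X| = 2 * h.

Lemma card_openers_half A : fpf_involution_on A X -> #|openers A X| = h.
Proof. by move/card_openers; rewrite cardX; lia. Qed.

Lemma opener_codeP A g o (i : 'I_h) :
  opener_code A X g -> o \in openers A X -> rank (openers A X) o = i -> rank X (A o) = g i.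
Proof. by move=> /forall_inP/[apply]/forallP/(_ i)/implyP oi /eqP/oi/eqP. Qed.

Lemma exists_opener_code A : fpf_involution_on A X -> exists g, opener_code A X g.
Proof.
move=> A_inv; have cardO := card_openers_half A_inv; case/fpf_involution_onP: A_inv => _ _ AX.
have /fin_all_exists[g gP] : forall i : 'I_h, exists u : 'I_(2 * h), forall o,
    o \in openers A X -> rank (openers A X) o = i -> rank X (A o) = u.
  move=> i.
  have [o oO oi] : exists2 o, o \in openers A X & rank (openers A X) o = i.
    by apply: rank_onto; rewrite cardO.
  have AoX : A o \in X by apply: AX; move: oO; rewrite inE => /andP[].
  have Ao_lt : rank X (A o) < 2 * h by rewrite -cardX rank_lt_card.
  by exists (Ordinal Ao_lt) => o' o'O o'i; rewrite (rank_inj o'O oO) // o'i oi.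
exists (finfun g); apply/forall_inP=> o oO; apply/forallP=> i; apply/implyP=> /eqP oi.
by rewrite ffunE (gP i o oO oi).
Qed.

Lemma openers_sub A1 A2 g :
  fpf_involution_on A1 X -> opener_code A1 X g ->
  fpf_involution_on A2 X -> opener_code A2 X g ->
  openers A1 X \subset openers A2 X.
Proof.
move=> A1_inv code1 A2_inv code2.
have cardO1 := card_openers_half A1_inv; have cardO2 := card_openers_half A2_inv.
case/fpf_involution_onP: A1_inv => A1inv _ A1X.
case/fpf_involution_onP: A2_inv => A2inv A2free A2X.
apply/subsetP=> y; rewrite !inE => /andP[yX yA1]; rewrite yX /=.
case: ltngtP => [//|A2y|/val_inj/eqP]; last by rewrite eq_sym (negbTE (A2free y)).
have oO : A2 y \in openers A2 X by rewrite inE A2X //= A2inv.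
have i_lt : rank (openers A2 X) (A2 y) < h.
  by rewrite -cardO2 rank_lt_card.
have [o' o'O o'i] : exists2 o', o' \in openers A1 X & rank (openers A1 X) o' = Ordinal i_lt.
  by apply: rank_onto; rewrite cardO1.
have := opener_codeP code2 oO (erefl (Ordinal i_lt : nat)).
rewrite A2inv -(opener_codeP code1 o'O o'i) => /esym/rank_inj o'y.
have {}o'y : A1 o' = y by apply: o'y; rewrite // A1X //; case/setIdP: o'O.
by case/setIdP: o'O => _; rewrite o'y -[o']A1inv o'y => /(ltn_trans yA1); rewrite ltnn.
Qed.

Lemma opener_code_uniq A1 A2 g :
  fpf_involution_on A1 X -> opener_code A1 X g ->
  fpf_involution_on A2 X -> opener_code A2 X g ->
  {in X, A1 =1 A2}.
Proof.
move=> A1_inv code1 A2_inv code2.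
have O12 : openers A1 X = openers A2 X.
  apply/eqP; rewrite eqEsubset (openers_sub A1_inv code1 A2_inv code2).
  exact: openers_sub A2_inv code2 A1_inv code1.
have cardO1 := card_openers_half A1_inv.
case/fpf_involution_onP: A1_inv => A1inv A1free A1X.
case/fpf_involution_onP: A2_inv => A2inv _ A2X.
have onO : {in openers A1 X, A1 =1 A2}.
  move=> o oO; have /setIdP[oX _] := oO.
  have i_lt : rank (openers A1 X) o < h by rewrite -cardO1 rank_lt_card.
  apply: (rank_inj (A1X o oX) (A2X o oX)).
  rewrite (opener_codeP code1 oO (erefl (Ordinal i_lt : nat))).
  by rewrite (opener_codeP code2 (i := Ordinal i_lt)) -?O12.
move=> x xX; have [|xO] := boolP (x \in openers A1 X); first exact: onO.
have AxO : A1 x \in openers A1 X.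
  rewrite inE A1X //= A1inv; move: xO; rewrite inE xX /=.
  by case: ltngtP => // /val_inj/eqP; rewrite eq_sym (negbTE (A1free x)).
by have := onO _ AxO; rewrite A1inv => {2}->; rewrite A2inv.
Qed.

End Code.
End Openers.

(** * Canonically labelled maps *)

(* Blocks of consecutive positions start at 0 and at the positions satisfying
   [start]; [block_next] moves cyclically inside a block, the [\max] jumping
   back to its start. *)
Definition block_next (start : pred nat) (len i : nat) : nat :=
  if (i.+1 < len) && ~~ start i.+1 then i.+1 else \max_(b < i.+1 | start b) b.

Lemma block_next_rcons (BS : seq nat) len len' i :
  {in BS, forall b, b < len} -> i < len -> len <= len' ->
  block_next [in rcons BS len] len' i = block_next [in BS] len i.
Proof.
move=> BSlt ilt lelen; rewrite /block_next.
have -> : \max_(b < i.+1 | [in rcons BS len] b) b = \max_(b < i.+1 | [in BS] b) b.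
  apply: eq_bigl => b /=; rewrite mem_rcons in_cons.
  by have := ltn_ord b; case: eqP => // ->; lia.
rewrite mem_rcons in_cons; have [iS|->] : i.+1 < len \/ i.+1 = len by lia.
  by rewrite iS (leq_trans iS lelen) (ltn_eqF iS).
by rewrite eqxx ltnn andbF.
Qed.

Lemma block_next_last (BS : seq nat) len m k :
  {in BS, forall b, b < len} -> k < m ->
  block_next [in rcons BS len] (len + m) (len + k) = len + block_next [in [::]] m k.
Proof.
move=> BSlt km; rewrite /block_next /= -addnS ltn_add2l mem_rcons in_cons.
have -> : (len + k.+1 == len) || (len + k.+1 \in BS) = false.
  by apply/negbTE; rewrite negb_or; apply/andP; split; [lia|apply/negP=> /BSlt; lia].
case: (k.+1 < m) => //=; rewrite [in RHS]big_pred0 // addn0.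
apply/eqP; rewrite eqn_leq; apply/andP; split.
  apply/bigmax_leqP => b /=; rewrite mem_rcons in_cons => /orP[/eqP -> //|/BSlt /ltnW //].
have len_lt : len < len + k.+1 by lia.
by apply: (leq_bigmax_cond (Ordinal len_lt)); rewrite /= mem_rcons mem_head.
Qed.

Lemma eq_block_next (start1 start2 : pred nat) len i :
  (forall k, k < len -> start1 k = start2 k) -> i < len ->
  block_next start1 len i = block_next start2 len i.
Proof.
move=> start12 ilen; rewrite /block_next.
rewrite (eq_bigl (fun b : 'I_i.+1 => start2 b)) => [|b].
  by case: ltnP => [i1_lt|//]; rewrite start12.
exact/start12/(leq_trans (ltn_ord b)).
Qed.

Section Canonical.
Variables (N n h : nat).
Implicit Types (A S : {perm 'I_N}) (X B : {set 'I_N}) (g : {ffun 'I_h -> 'I_(2 * h)}).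

Definition is_start B : pred nat := fun k => [exists b in B, val b == k].

Definition block_perm B S : bool :=
  [forall x, S x == block_next (is_start B) N x :> nat].

Definition tree_edges A X B : bool :=
  [forall b in B, (A b \notin X) && (A b \notin B)] &&
  [forall b1 in B, forall b2 in B, (b1 < b2) ==> (A b1 < A b2)].

Definition canonical A S X B g : bool :=
  [&& #|X| == 2 * h, #|B| == n.-1, B \subset ~: X, block_perm B S &
  [&& fpf_involution_on A X, tree_edges A X B & opener_code A X g]].

Lemma tree_edges_image A X B :
  tree_edges A X B -> #|~: (X :|: B)| = #|B| -> A @: B = ~: (X :|: B).
Proof.
case/andP=> /forall_inP AB _ cardC; apply/eqP; rewrite eqEcard cardC card_imset ?leqnn ?andbT.
  by apply/subsetP=> _ /imsetP[b /AB Ab ->]; rewrite !inE negb_or.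
exact: perm_inj.
Qed.

Lemma tree_edges_homo A X B : tree_edges A X B -> {in B &, {homo A : x y / x < y}}.
Proof. by case/andP=> _ /forall_inP A_homo b1 b2 /A_homo/forall_inP/[apply]/implyP. Qed.

Lemma canonical_uniq A1 S1 A2 S2 X B g : N = 2 * n.-1 + 2 * h ->
  canonical A1 S1 X B g -> canonical A2 S2 X B g -> A1 = A2 /\ S1 = S2.
Proof.
move=> eN /and5P[/eqP cardX /eqP cardB BX /forallP S1B /and3P[A1_inv tree1 code1]].
case/and5P=> _ _ _ /forallP S2B /and3P[A2_inv tree2 code2].
split; last by apply/permP=> x; apply/val_inj; rewrite /= (eqP (S1B x)) (eqP (S2B x)).
have cardC : #|~: (X :|: B)| = #|B|.
  have XB : X :&: B = set0 by rewrite setIC; apply/disjoint_setI0; rewrite disjoints_subset.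
  by have := cardsC (X :|: B); rewrite cardsU XB cards0 card_ord cardX cardB; lia.
have onX := opener_code_uniq cardX A1_inv code1 A2_inv code2.
case/fpf_involution_onP: A1_inv => A1inv _ _; case/fpf_involution_onP: A2_inv => A2inv _ _.
have AB1 := tree_edges_image tree1 cardC; have AB2 := tree_edges_image tree2 cardC.
have onB : {in B, A1 =1 A2}.
  apply: homo_ltn_onto_eq (tree_edges_homo tree1) (tree_edges_homo tree2) _.
  by rewrite AB1 AB2.
apply/permP=> x; have [xX|xX] := boolP (x \in X); first exact: onX.
have [xB|xB] := boolP (x \in B); first exact: onB.
have : x \in A1 @: B by rewrite AB1 !inE negb_or xX.
by case/imsetP=> b bB ->; rewrite A1inv (onB b bB) A2inv.
Qed.

End Canonical.

Arguments canonical {N} n h A S X B g.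

(** * Exploring a connected map *)

Section Explore.
Variables (T : finType) (a s : {perm T}) (x0 : T).
Hypothesis a_inv : involutive a.

Definition orb r : seq T := traject s r #|porbit s r|.

Lemma orb_uniq r : uniq (orb r).
Proof. exact: uniq_traject_porbit. Qed.

Lemma mem_orb r y : (y \in orb r) = (y \in porbit s r).
Proof. by rewrite -porbit_traject. Qed.

Lemma orbE r : orb r = r :: traject s (s r) #|porbit s r|.-1.
Proof. by rewrite /orb; case: #|porbit s r| (card_porbit_neq0 s r). Qed.

Lemma orb_head r : r \in orb r.
Proof. by rewrite orbE mem_head. Qed.

Lemma mem_orb_succ r y : (s y \in orb r) = (y \in orb r).
Proof.
by rewrite !mem_orb -!eq_porbit_mem; have := porbit_perm s 1 y; rewrite expg1 => ->.
Qed.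

Lemma index_orb_succ r y : y \in orb r ->
  index (s y) (orb r) = block_next [in [::]] (size (orb r)) (index y (orb r)).
Proof.
move=> yr; rewrite /block_next big_pred0 //= andbT size_traject; set k := index y _.
have k_lt : k < #|porbit s r| by have := index_mem y (orb r); rewrite size_traject yr.
have -> : s y = iter k.+1 s r by rewrite iterS -(nth_traject s k_lt r) nth_index.
case: ltnP => [k1_lt|].
  by rewrite -(nth_traject s k1_lt r) index_uniq ?size_traject ?orb_uniq.
rewrite leq_eqVlt ltnNge k_lt orbF => /eqP <-; rewrite iter_porbit.
by rewrite orbE /= eqxx.
Qed.

Lemma porbit_closed (P : seq T) x y :
  {in P, forall z, s z \in P} -> x \in P -> y \in porbit s x -> y \in P.
Proof.
move=> Ps xP /porbitP[i ->]; elim: i => [|i IHi]; first by rewrite expg0 perm1.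
by rewrite expgSr permM; apply: Ps.
Qed.

Lemma porbits_orb r : porbit s @: [set x in orb r] = [set porbit s r].
Proof.
apply/setP=> O; rewrite inE; apply/imsetP/eqP => [[x]|->].
  by rewrite inE mem_orb => xr ->; apply/eqP; rewrite eq_porbit_mem.
by exists r; rewrite ?inE ?orb_head.
Qed.

Definition parent (P : seq T) (b : nat) : nat := index (a (nth x0 P b)) P.

(* [P] lists the explored darts vertex by vertex and [BS] the positions where
   the vertices after the first one start; the vertex starting at [b] was
   entered through the dart at position [parent P b], which was then the first
   dart of [P] whose partner was not in [P]. *)
Record explored (P : seq T) (BS : seq nat) : Prop := Explored {
  explored_uniq : uniq P;
  explored_succ : {in P, forall x, s x \in P};
  explored_starts_lt : {in BS, forall b, b < size P};
  explored_starts_uniq : uniq BS;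
  explored_next : {in P, forall x,
    index (s x) P = block_next [in BS] (size P) (index x P)};
  explored_parent_lt : {in BS, forall b, parent P b < b};
  explored_parent_homo : {in BS &, {homo parent P : b1 b2 / b1 < b2}};
  explored_parent_closed :
    {in BS, forall b x, x \in P -> index x P <= parent P b -> a x \in P};
  explored_orbits : #|porbit s @: [set x in P]| = (size BS).+1 }.

Lemma explored_orb r : explored (orb r) [::].
Proof.
split=> //; [exact: orb_uniq | by move=> x; rewrite mem_orb_succ | exact: index_orb_succ |].
by rewrite porbits_orb cards1.
Qed.

Section Extend.
Variables (P : seq T) (BS : seq nat).
Hypotheses (EP : explored P BS) (P_open : has (fun x => a x \notin P) P).

Let ip := find (fun x => a x \notin P) P.
Let p := nth x0 P ip.
Let L := orb (a p).

Let ip_lt : ip < size P. Proof. by rewrite -has_find. Qed.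
Let p_in : p \in P. Proof. exact: mem_nth. Qed.
Let ap_notin : a p \notin P. Proof. exact: (nth_find x0 P_open). Qed.
Let index_p : index p P = ip. Proof. by rewrite index_uniq ?(explored_uniq EP). Qed.

Let L_notin : {in L, forall y, y \notin P}.
Proof.
move=> y; rewrite mem_orb porbit_sym => apy; apply: contra ap_notin => yP.
exact: porbit_closed (explored_succ EP) yP apy.
Qed.

Let parent_in : {in BS, forall b, a (nth x0 P b) \in P}.
Proof.
move=> b bBS; rewrite -index_mem.
exact: ltn_trans (explored_parent_lt EP bBS) (explored_starts_lt EP bBS).
Qed.

Let index_catP : {in P, forall y, index y (P ++ L) = index y P}.
Proof. by move=> y yP; rewrite index_cat yP. Qed.

Let index_catL : {in L, forall y, index y (P ++ L) = size P + index y L}.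
Proof. by move=> y /L_notin yP; rewrite index_cat (negbTE yP). Qed.

Let parent_cat_old : {in BS, forall b, parent (P ++ L) b = parent P b}.
Proof.
move=> b bBS; rewrite /parent nth_cat (explored_starts_lt EP bBS).
exact/index_catP/parent_in.
Qed.

Let parent_cat_new : parent (P ++ L) (size P) = ip.
Proof.
have L0 : nth x0 L 0 = a p by rewrite /L orbE.
by rewrite /parent nth_cat ltnn subnn L0 a_inv (index_catP p_in).
Qed.

Let parent_before : {in BS, forall b, parent P b < ip}.
Proof.
move=> b bBS; rewrite ltnNge; apply: contra ap_notin => ip_le.
by apply: (explored_parent_closed EP bBS) => //; rewrite index_p.
Qed.

Let extend_next : {in P ++ L, forall x,
  index (s x) (P ++ L) = block_next [in rcons BS (size P)] (size (P ++ L)) (index x (P ++ L))}.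
Proof.
move=> x; rewrite mem_cat => /orP[xP|xL].
  have sxP : s x \in P by exact: (explored_succ EP).
  rewrite !index_catP // (explored_next EP) //.
  rewrite block_next_rcons ?size_cat ?leq_addr ?index_mem //.
  exact: (explored_starts_lt EP).
have sxL : s x \in L by rewrite mem_orb_succ.
rewrite !index_catL // size_cat block_next_last ?index_mem ?index_orb_succ //.
exact: (explored_starts_lt EP).
Qed.

Let extend_parent_closed : {in rcons BS (size P), forall b x,
  x \in P ++ L -> index x (P ++ L) <= parent (P ++ L) b -> a x \in P ++ L}.
Proof.
move=> b; rewrite mem_rcons in_cons => bBS x; rewrite mem_cat => /orP[xP|xL]; last first.
  rewrite index_catL //.
  case/orP: bBS => [/eqP ->|bBS]; rewrite ?parent_cat_new ?parent_cat_old //.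
    by move/(leq_trans (leq_addr _ _)); rewrite leqNgt ip_lt.
  have := ltn_trans (explored_parent_lt EP bBS) (explored_starts_lt EP bBS).
  by move=> lt /(leq_trans (leq_addr _ _)); rewrite leqNgt lt.
rewrite index_catP // mem_cat; case/orP: bBS => [/eqP ->|bBS]; last first.
  by rewrite parent_cat_old // => /(explored_parent_closed EP bBS xP) ->.
rewrite parent_cat_new leq_eqVlt => /orP[/eqP xip|/(before_find x0)].
  by rewrite -(nth_index x0 xP) xip orb_head orbT.
by rewrite nth_index // => /negbFE ->.
Qed.

Let extend_orbits :
  #|porbit s @: [set x in P ++ L]| = (size (rcons BS (size P))).+1.
Proof.
have -> : [set x in P ++ L] = [set x in P] :|: [set x in L].
  by apply/setP=> y; rewrite !inE mem_cat.
rewrite imsetU porbits_orb setUC cardsU1 (explored_orbits EP) size_rcons.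
suff -> : porbit s (a p) \notin porbit s @: [set x in P] by [].
apply/imsetP=> -[x]; rewrite inE => xP apx; apply: (negP ap_notin).
by apply: porbit_closed (explored_succ EP) xP _; rewrite -apx porbit_id.
Qed.

Lemma explored_extend : explored (P ++ L) (rcons BS (size P)).
Proof.
have L_gt0 : 0 < size L by rewrite /L orbE.
apply: (Explored _ _ _ _ extend_next _ _ extend_parent_closed extend_orbits).
- rewrite cat_uniq (explored_uniq EP) orb_uniq andbT /=.
  by apply/hasPn=> y /L_notin.
- move=> x; rewrite !mem_cat => /orP[xP|xL]; first by rewrite (explored_succ EP).
  by rewrite mem_orb_succ xL orbT.
- move=> b; rewrite mem_rcons in_cons size_cat => /orP[/eqP ->|/(explored_starts_lt EP) bP].
    by rewrite -[X in X < _]addn0 ltn_add2l.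
  exact: ltn_addr.
- rewrite rcons_uniq (explored_starts_uniq EP) andbT.
  by apply/negP=> /(explored_starts_lt EP); rewrite ltnn.
- move=> b; rewrite mem_rcons in_cons => /orP[/eqP ->|bBS]; first by rewrite parent_cat_new.
  by rewrite parent_cat_old // (explored_parent_lt EP).
- move=> b1 b2; rewrite !mem_rcons !in_cons.
  case/orP=> [/eqP ->|b1BS] /orP[/eqP ->|b2BS]; rewrite ?ltnn //.
  + by rewrite ltnNge ltnW ?(explored_starts_lt EP).
  + by rewrite parent_cat_old // parent_cat_new parent_before.
  + by rewrite !parent_cat_old //; apply: (explored_parent_homo EP).
Qed.

End Extend.

Lemma connect_closed (P : seq T) x y :
  {in P, forall z, a z \in P} -> {in P, forall z, s z \in P} ->
  x \in P -> connect (fun u v => (v == a u) || (v == s u)) x y -> y \in P.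
Proof.
move=> Pa Ps xP /connectP[q]; elim: q x xP => [x xP _ -> //|z q IHq x xP /= /andP[xz]].
by apply: IHq; case/orP: xz => /eqP ->; [apply: Pa | apply: Ps].
Qed.

Lemma explored_size_le P BS : explored P BS -> size P <= #|T|.
Proof. by move=> EP; rewrite -(card_uniqP (explored_uniq EP)) max_card. Qed.

Lemma exists_explored_full (r : T) :
  (forall x y, connect (fun u v => (v == a u) || (v == s u)) x y) ->
  exists P BS, explored P BS /\ forall y, y \in P.
Proof.
move=> conn; move: (explored_orb r) (orb_head r).
have [k] := ubnP (#|T| - size (orb r)); elim: k (orb r) [::] => // k IHk P BS ltk EP rP.
have [P_open|P_closed] := boolP (has (fun x => a x \notin P) P).
  apply: IHk (explored_extend EP P_open) _; last by rewrite mem_cat rP.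
  have := explored_size_le (explored_extend EP P_open); rewrite size_cat orbE /=.
  (* [set] identifies two elaborations of [#|T|] that [lia] would keep apart. *)
  by move: ltk; set c := #|T|; lia.
exists P, BS; split=> // y; apply: connect_closed (explored_succ EP) rP (conn r y).
by move=> z zP; have := hasPn P_closed z zP; rewrite negbK.
Qed.

End Explore.

(** * Relabelling darts by exploration order *)

Lemma size_uniq_full (T : finType) (P : seq T) :
  uniq P -> (forall y, y \in P) -> size P = #|T|.
Proof.
by move=> P_uniq P_full; rewrite -(card_uniqP P_uniq); apply: eq_card => y; rewrite P_full.
Qed.

Lemma exists_index_perm N (P : seq 'I_N) :
  uniq P -> (forall y, y \in P) -> exists t : {perm 'I_N}, forall y, val (t y) = index y P.
Proof.
move=> P_uniq P_full; have := size_uniq_full P_uniq P_full; rewrite card_ord => size_P.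
have index_lt y : index y P < N by have := index_mem y P; rewrite P_full size_P.
have lab_inj : injective (fun y => Ordinal (index_lt y)).
  by move=> y z [] /(congr1 (nth y P)); rewrite !nth_index.
by exists (perm lab_inj) => y; rewrite permE.
Qed.

Section Relabel.
Variables (N : nat) (a s t : {perm 'I_N}) (x0 : 'I_N) (P : seq 'I_N) (BS : seq nat).
Hypotheses (a_inv : involutive a) (a_free : forall x, a x != x).
Hypotheses (EP : explored a s x0 P BS) (P_full : forall y, y \in P).
Hypothesis val_t : forall y, val (t y) = index y P.

Let A := (a ^ t)%g.
Let S := (s ^ t)%g.
Let B := [set i : 'I_N | val i \in BS].
Let X := ~: (B :|: A @: B).

Let size_P : size P = N.
Proof. by rewrite (size_uniq_full (explored_uniq EP) P_full) card_ord. Qed.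

Let t_nth (i : 'I_N) : t (nth x0 P i) = i.
Proof. by apply: val_inj; rewrite val_t index_uniq ?size_P ?(explored_uniq EP). Qed.

Let BS_lt : {in BS, forall b, b < N}.
Proof. by rewrite -size_P; exact: (explored_starts_lt EP). Qed.

Let val_A b : val (A b) = parent a x0 P b.
Proof. by rewrite -{1}(t_nth b) permJ val_t. Qed.

Let A_inv : involutive A.
Proof. by move=> x; rewrite -(t_nth x) !permJ a_inv. Qed.

Let A_free x : A x != x.
Proof. by rewrite -(t_nth x) permJ (inj_eq perm_inj). Qed.

Let card_B : #|B| = size BS.
Proof.
have -> : #|B| = #|pmap (insub : nat -> option 'I_N) BS|.
  by apply: eq_card => i; rewrite inE mem_pmap_sub.
rewrite (card_uniqP (pmap_sub_uniq _ (explored_starts_uniq EP))) size_pmap_sub.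
by apply/eqP; rewrite -all_count; apply/allP=> b /BS_lt.
Qed.

Let is_startE k : k < N -> is_start B k = (k \in BS).
Proof.
move=> kN; apply/existsP/idP => [[b /andP[]]|kBS]; first by rewrite inE => bBS /eqP <-.
by exists (Ordinal kN); rewrite inE kBS eqxx.
Qed.

Lemma relabel_block_perm : block_perm B S.
Proof.
apply/forallP=> x; rewrite -(t_nth x) permJ !val_t (explored_next EP) ?mem_nth ?size_P //.
have -> : index (nth x0 P x) P = x by rewrite -val_t t_nth.
by apply/eqP/eq_block_next => // k /is_startE ->.
Qed.

Let A_B_notin b : b \in B -> A b \notin B.
Proof.
rewrite !inE => bBS; apply/negP => AbBS.
have := explored_parent_lt EP AbBS; rewrite -val_A A_inv.
move=> /(ltn_trans (explored_parent_lt EP bBS)).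
by rewrite -val_A ltnn.
Qed.

Lemma relabel_tree_edges : tree_edges A X B.
Proof.
apply/andP; split; apply/forall_inP=> b bB.
  by rewrite A_B_notin // andbT /X in_setC negbK in_setU imset_f ?orbT.
apply/forall_inP=> b' b'B; apply/implyP => lt_bb'; rewrite !val_A.
by move: bB b'B; rewrite !inE => bBS b'BS; apply: (explored_parent_homo EP bBS b'BS).
Qed.

Let relabel_closed : {in X, forall x, A x \in X}.
Proof.
move=> x; rewrite !in_setC !in_setU !negb_or => /andP[xB xAB]; apply/andP; split.
  by apply: contra xAB => AxB; rewrite -[x]A_inv imset_f.
by apply: contra xB => /imsetP[b bB /perm_inj ->].
Qed.

Lemma card_relabel_X : #|X| + (size BS).*2 = N.
Proof.
have BAB : [disjoint B & A @: B].
  apply/pred0P=> x /=; apply/andP => -[xB /imsetP[b bB xE]].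
  by move: xB; rewrite xE (negbTE (A_B_notin bB)).
have card_BAB : #|B :|: A @: B| = (size BS).*2.
  rewrite cardsU (disjoint_setI0 BAB) cards0 subn0 card_imset ?card_B ?addnn //.
  exact: perm_inj.
by rewrite -card_BAB addnC /X cardsC card_ord.
Qed.

Lemma relabel_canonical n h : n = (size BS).+1 -> N = 2 * n.-1 + 2 * h ->
  exists X B g, canonical n h A S X B g.
Proof.
move=> en eN; have cardX : #|X| = 2 * h by have := card_relabel_X; lia.
have A_X : fpf_involution_on A X by apply/fpf_involution_onP; split; [|exact: A_free|].
have [g code] := exists_opener_code cardX A_X.
exists X, B, g; apply/and5P; split; rewrite ?cardX ?card_B ?en //.
- by rewrite /X setCK subsetUl.
- exact: relabel_block_perm.
by rewrite A_X relabel_tree_edges code.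
Qed.

End Relabel.

(** * Counting *)

Section StartPairs.
Variables (N h : nat).

Definition start_pairs : {set {set 'I_N} * {set 'I_N}} :=
  [set XB : {set 'I_N} * {set 'I_N} | (#|XB.1| == 2 * h) && (XB.2 \subset ~: XB.1)].

Lemma card_start_pairs : #|start_pairs| <= 2 ^ N * 2 ^ (N - 2 * h).
Proof.
have fibre X : #|[set B | (X, B) \in start_pairs]| <= 2 ^ (N - 2 * h).
  have [cardX|ncardX] := eqVneq #|X| (2 * h); last first.
    rewrite (_ : [set B | _] = set0) ?cards0 //.
    by apply/setP=> B; rewrite !inE /= (negbTE ncardX).
  rewrite (_ : [set B | _] = powerset (~: X)); last first.
    by apply/setP=> B; rewrite !inE /= cardX eqxx.
  by rewrite card_powerset cardsCs setCK card_ord cardX.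
have card_sets : #|{set 'I_N}| = 2 ^ N.
  have := card_powerset [set: 'I_N]; rewrite cardsT card_ord => <-.
  by apply: eq_card => A; rewrite !inE subsetT.
rewrite -card_sets -sum_nat_const -sum1_card big_mkcond /=.
rewrite (_ : \sum_p _ = \sum_X \sum_B (if (X, B) \in start_pairs then 1 else 0)); last first.
  by rewrite pair_bigA; apply: eq_bigr => -[].
apply: leq_sum => X _; apply: leq_trans (fibre X); apply: eq_leq.
by rewrite -sum1_card [RHS]big_mkcond; apply: eq_bigr => B _; rewrite inE.
Qed.
End StartPairs.

Lemma card_le_code (T C : finType) (W : {set T}) (codes : {set C}) (R : T -> C -> bool) :
  (forall x, x \in W -> exists2 c, c \in codes & R x c) ->
  (forall x y c, R x c -> R y c -> x = y) -> #|W| <= #|codes|.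
Proof.
move=> W_code R_uniq; pose f x := [pick c in codes | R x c].
have fW x : x \in W -> exists2 c, f x = Some c & (c \in codes) && R x c.
  case/W_code=> c c_code Rxc; rewrite /f; case: pickP => [c' ? | /(_ c)]; first by exists c'.
  by rewrite c_code Rxc.
have f_inj : {in W &, injective f}.
  move=> x y /fW[c -> /andP[_ Rxc]] /fW[c' -> /andP[_ Ryc']] [cc'].
  by apply: R_uniq Rxc _; rewrite cc'.
rewrite -(card_in_imset f_inj) -(card_imset codes (@Some_inj _)).
by apply/subset_leq_card/subsetP=> _ /imsetP[x /fW[c -> /andP[c_code _]] ->]; exact: imset_f.
Qed.

Lemma iso_class_conj m (M : cmap m) (t : {perm dart m}) :
  iso_class ((M.1 ^ t)%g, (M.2 ^ t)%g) = iso_class M.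
Proof.
apply/setP=> y; apply/imsetP/imsetP => -[u _ ->] /=.
  by exists (t * u)%g; rewrite ?inE // !conjgM.
by exists (t^-1 * u)%g; rewrite ?inE // -!conjgM mulKVg.
Qed.

Lemma cmap_conj_canonical m n h (M : cmap m) (x0 : dart m) :
  is_cmap M -> nverts M = n -> m = n.-1 + h ->
  exists t X B g, canonical n h (M.1 ^ t)%g (M.2 ^ t)%g X B g.
Proof.
case: M => a s /and3P[/forallP a_free /forallP a_inv /forallP conn] /= nv em.
have {}a_inv : involutive a by move=> x; apply/eqP.
have {}conn x y : connect (fun u v => (v == a u) || (v == s u)) x y.
  by have /forallP := conn x; apply.
have [P [BS [EP P_full]]] := exists_explored_full x0 a_inv x0 conn.
have [t val_t] := exists_index_perm (explored_uniq EP) P_full.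
exists t; apply: (relabel_canonical a_inv a_free EP P_full val_t); last lia.
have orbits : porbits s = porbit s @: [set x in P].
  by apply/setP=> O; apply/imsetP/imsetP => -[y _ ->]; exists y; rewrite ?inE ?P_full.
by move: nv; rewrite /nverts /= orbits (explored_orbits EP); lia.
Qed.

Lemma card_iso_classes_le m n h : 0 < n -> m = n.-1 + h ->
  #|[set iso_class M | M in [set M : cmap m | is_cmap M && (nverts M == n)]]|
    <= 2 ^ (4 * n + 3 * h) * h ^ h.
Proof.
move=> n_gt0 em; set V := [set M | _].
(* Without edges there is no dart to start exploring from, and only one map. *)
have [m0|m_gt0] := posnP m.
  apply: leq_trans (leq_imset_card _ _) _; apply: leq_trans (max_card _) _.
  by rewrite card_prod /dart m0 !card_Sn muln_gt0 !expn_gt0 /=; case: (h).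
have N_gt0 : 0 < 2 * m by rewrite muln_gt0.
pose codes := setX (start_pairs (2 * m) h) [set: {ffun 'I_h -> 'I_(2 * h)}].
pose W := [set M : cmap m | [exists c in codes, canonical n h M.1 M.2 c.1.1 c.1.2 c.2]].
have VW : (@iso_class m) @: V \subset (@iso_class m) @: W.
  apply/subsetP=> _ /imsetP[M + ->]; rewrite inE => /andP[M_cmap /eqP nv].
  have [t [X [B [g canon]]]] := cmap_conj_canonical (Ordinal N_gt0) M_cmap nv em.
  apply/imsetP; exists ((M.1 ^ t)%g, (M.2 ^ t)%g); rewrite ?iso_class_conj //.
  rewrite inE; apply/existsP; exists ((X, B), g); rewrite canon andbT !inE /=.
  by case/and5P: canon => -> _ -> _ _.
have card_W : #|W| <= #|codes|.
  apply: (card_le_code (R := fun M c => canonical n h M.1 M.2 c.1.1 c.1.2 c.2)).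
    by move=> M; rewrite inE => /exists_inP.
  move=> [A1 S1] [A2 S2] c /= canon1 canon2.
  have eN : 2 * m = 2 * n.-1 + 2 * h by lia.
  by have [-> ->] := canonical_uniq eN canon1 canon2.
have card_codes : #|codes| <= 2 ^ (2 * m) * 2 ^ (2 * m - 2 * h) * (2 * h) ^ h.
  by rewrite cardsX cardsT card_ffun !card_ord leq_mul2r card_start_pairs orbT.
apply: leq_trans (subset_leq_card VW) _; apply: leq_trans (leq_imset_card _ _) _.
apply: leq_trans card_W _; apply: leq_trans card_codes _.
rewrite expnMn mulnA -!expnD leq_mul2r leq_pexp2l ?orbT //; lia.
Qed.

Unset Implicit Arguments.

Theorem lemma9 (n h : nat) :
  (1 <= n)%N -> ~~ odd h ->
  (num_unicellular n h./2 <= 2 ^ (4 * n + 3 * h) * h ^ h)%N.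
Proof.
move=> n_gt0 h_even.
have em : uni_edges n h./2 = n.-1 + h.
  by have := odd_double_half h; rewrite (negbTE h_even) /uni_edges -muln2; lia.
apply: leq_trans (card_iso_classes_le n_gt0 em); apply/subset_leq_card/imsetS/subsetP=> M.
by rewrite !inE => /andP[/andP[/andP[-> ->] _] _].
Qed.
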